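(* Let $\mathbb{F}\subset\mathbb{K}$ be fields of characteristic zero and let $a\colon\mathbb{F}\to\mathbb{K}$ be an additive mapping such that \[ 2a(x^{6})-9x^{2}a(x^{4})-4x^{3}a(x^{3})+36x^{4}a(x^{2})-36x^{5}a(x)=0\qquad(x\in\mathbb{F}). \] Then $a$ is a derivation of order $3$.
   Context: Derivations of higher order: the identically zero map is the only derivation of order $0$; for $m\ge1$, an additive map $d\colon\mathbb{F}\to\mathbb{K}$ is a derivation of order $m$ if there is a map $B\colon\mathbb{F}\times\mathbb{F}\to\mathbb{K}$ which is a derivation of order $m-1$ in each variable such that $d(xy)-xd(y)-d(x)y=B(x,y)$ for all $x,y\in\mathbb{F}$. *)

From mathcomp Require Import all_boot all_algebra.
Set Implicit Arguments. Unset Strict Implicit. Unset Printing Implicit Defensive.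
Import GRing.Theory.
Local Open Scope ring_scope.

(* The inclusion F ⊂ K is represented by a ring morphism iota : F -> K
   (automatically injective, F a field). *)

Definition additive_map (F K : fieldType) (d : F -> K) : Prop :=
  forall x y, d (x + y) = d x + d y.

Fixpoint derivation_of_order (F K : fieldType) (iota : {rmorphism F -> K})
    (m : nat) (d : F -> K) {struct m} : Prop :=
  match m with
  | 0%N => forall x, d x = 0
  | m'.+1 =>
      additive_map d /\
      exists B : F -> F -> K,
        (forall y, derivation_of_order iota m' (fun x => B x y)) /\
        (forall x, derivation_of_order iota m' (B x)) /\
        (forall x y, d (x * y) - iota x * d y - d x * iota y = B x y)
  end.

From mathcomp Require Import all_boot all_algebra.
From mathcomp Require Import ring.
Import GRing.Theory.

(* Substitute x + t y for x in the functional equation.  Since [a] is only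
   additive, take t a natural number: then both sides are polynomials in t, and
   a polynomial vanishing at every natural number is zero in characteristic 0.
   Its linear coefficient is a directional derivative of the identity, which is
   again an identity in x.  Differentiating in the directions y, z, w and then
   x, and evaluating at 1, leaves 504 times the third iterated Leibniz defect of
   [a] at (x, y, z, w) (with a 1 = 0, the equation at x = 1).  Hence that
   defect vanishes, which is what being a derivation of order 3 means. *)

Set Implicit Arguments.
Unset Strict Implicit.
Unset Printing Implicit Defensive.

Local Open Scope ring_scope.

Section NatRoots.
Variable R : idomainType.
Hypothesis R0 : [pchar R] =i pred0.

Lemma natf_neq0_pchar0 n : n != 0%N -> n%:R != 0 :> R.
Proof. by have /pcharf0P -> := R0. Qed.

Lemma natr_inj_pchar0 : injective (fun n : nat => n%:R : R).
Proof.
have /pcharf0P natr_eq0 := R0.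
have eq_le k l : (k <= l)%N -> k%:R = l%:R :> R -> k = l.
  move=> lekl /esym/eqP; rewrite -subr_eq0 -natrB // natr_eq0 subn_eq0 => lelk.
  by apply/eqP; rewrite eqn_leq lekl.
move=> m n /= Emn; case: (leqP m n) => [/eq_le-> // | /ltnW/eq_le nm].
exact/esym/nm/esym.
Qed.

Lemma poly_natr_roots_eq0 (p : {poly R}) : (forall n, p.[n%:R] = 0) -> p = 0.
Proof.
move=> p0; apply: (@roots_geq_poly_eq0 _ p [seq n%:R | n <- iota 0 (size p)]).
- by apply/allP => _ /mapP [n _ ->]; apply/rootP.
- by rewrite map_inj_uniq ?iota_uniq //; exact: natr_inj_pchar0.
- by rewrite size_map size_iota.
Qed.

End NatRoots.

Section PolyJet.
Variable R : comNzRingType.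

Definition poly_jet (h : nat -> R) (c0 c1 : R) : Prop :=
  exists p : {poly R}, [/\ forall t, h t = p.[t%:R], p`_0 = c0 & p`_1 = c1].

Lemma poly_jetC c : poly_jet (fun=> c) c 0.
Proof. by exists c%:P; rewrite !coefC; split=> // t; rewrite hornerC. Qed.

Lemma poly_jetX : poly_jet (fun t => t%:R) 0 1.
Proof. by exists 'X; rewrite !coefX; split=> // t; rewrite hornerX. Qed.

Lemma poly_jetD h1 h2 b0 b1 c0 c1 :
  poly_jet h1 b0 b1 -> poly_jet h2 c0 c1 ->
  poly_jet (fun t => h1 t + h2 t) (b0 + c0) (b1 + c1).
Proof.
move=> [p [Ep <- <-]] [q [Eq <- <-]]; exists (p + q).
by rewrite !coefD; split=> // t; rewrite hornerD Ep Eq.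
Qed.

Lemma poly_jetM h1 h2 b0 b1 c0 c1 :
  poly_jet h1 b0 b1 -> poly_jet h2 c0 c1 ->
  poly_jet (fun t => h1 t * h2 t) (b0 * c0) (b0 * c1 + b1 * c0).
Proof.
move=> [p [Ep <- <-]] [q [Eq <- <-]]; exists (p * q); split.
- by move=> t; rewrite hornerM Ep Eq.
- by rewrite coefM big_ord1.
- by rewrite coefM !big_ord_recr big_ord0 /= add0r.
Qed.

Lemma poly_jet_eq h h' c0 c1 c0' c1' :
  poly_jet h c0 c1 -> h' =1 h -> c0 = c0' -> c1 = c1' -> poly_jet h' c0' c1'.
Proof. by move=> [p [Ep ? ?]] Eh <- <-; exists p; split=> // t; rewrite Eh. Qed.

End PolyJet.

Arguments poly_jetX {R}.

Lemma poly_jet_slope_eq0 (R : idomainType) (h : nat -> R) c0 c1 :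
  [pchar R] =i pred0 -> poly_jet h c0 c1 -> h =1 (fun=> 0) -> c1 = 0.
Proof.
move=> R0 [p [Ep _ <-]] h0.
by rewrite (@poly_natr_roots_eq0 _ R0 p) ?coef0 // => n; rewrite -Ep h0.
Qed.

Section LeibnizDefect.
Variables (F K : fieldType) (io : {rmorphism F -> K}).

Definition leibniz_defect (h : F -> K) x y :=
  h (x * y) - io x * h y - h x * io y.

Fixpoint iter_leibniz_defect (h : F -> K) (ys : seq F) : F -> K :=
  if ys is y :: ys' then iter_leibniz_defect (fun x => leibniz_defect h x y) ys'
  else h.

Lemma leibniz_defectC h x y : leibniz_defect h x y = leibniz_defect h y x.
Proof. by rewrite /leibniz_defect mulrC; ring. Qed.

Lemma additive_leibniz_defect h y :
  additive_map h -> additive_map (fun x => leibniz_defect h x y).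
Proof.
by move=> h_add x z; rewrite /leibniz_defect mulrDl !h_add rmorphD; ring.
Qed.

Lemma eq_derivation_of_order m h h' :
  h =1 h' -> derivation_of_order io m h -> derivation_of_order io m h'.
Proof.
case: m => [|m] Eh /=; first by move=> h0 x; rewrite -Eh.
move=> [h_add [B [B1 [B2 EB]]]]; split; first by move=> x y; rewrite -!Eh.
by exists B; do 2!split=> //; move=> x y; rewrite -!Eh.
Qed.

Lemma derivation_of_order_succ m h : additive_map h ->
  (forall y, derivation_of_order io m (fun x => leibniz_defect h x y)) ->
  derivation_of_order io m.+1 h.
Proof.
move=> h_add hm; split=> //; exists (leibniz_defect h).
do 2!split=> //; move=> x.
by apply: eq_derivation_of_order (hm x) => y; rewrite leibniz_defectC.
Qed.

Lemma derivation_of_order_iter_defect m h : additive_map h ->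
  (forall ys, size ys = m -> iter_leibniz_defect h ys =1 (fun=> 0)) ->
  derivation_of_order io m h.
Proof.
elim: m h => [|m IHm] h h_add h0; first exact: (h0 [::]).
apply: derivation_of_order_succ => // y.
apply: IHm => [|ys size_ys]; first exact: additive_leibniz_defect.
by apply: (h0 (y :: ys)); rewrite /= size_ys.
Qed.

End LeibnizDefect.

Section Polarization.
Variables (F K : fieldType) (io : {rmorphism F -> K}) (a : F -> K).
Hypothesis a_add : additive_map a.

Lemma additive_map0 : a 0 = 0.
Proof. by apply: (addrI (a 0)); rewrite -a_add !addr0. Qed.

Lemma additive_map_natrM n z : a (n%:R * z) = n%:R * a z.
Proof.
elim: n => [|n IHn]; first by rewrite !mul0r additive_map0.
by rewrite -addn1 !natrD !mulrDl a_add IHn !mul1r.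
Qed.

Lemma poly_jet_rmorphX x y m :
  poly_jet (fun t => io (x + t%:R * y) ^+ m)
           (io x ^+ m) (m%:R * io x ^+ m.-1 * io y).
Proof.
have jet_io : poly_jet (fun t => io (x + t%:R * y)) (io x) (io y).
  apply: poly_jet_eq
    (poly_jetD (poly_jetC (io x)) (poly_jetM poly_jetX (poly_jetC (io y))))
    _ _ _.
  - by move=> t; rewrite rmorphD rmorphM rmorph_nat.
  - by rewrite mul0r addr0.
  - by rewrite mul0r mul1r !add0r.
elim: m => [|m IHm].
  by apply: poly_jet_eq (poly_jetC 1) _ _ _; rewrite ?mul0r.
apply: poly_jet_eq (poly_jetM IHm jet_io) _ _ _.
- by move=> t; rewrite exprSr.
- by rewrite exprSr.
rewrite mulrSr /= !mulrDl mul1r [RHS]addrC; congr (_ + _).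
by case: m {IHm} => [|m]; rewrite ?mul0r //= exprSr; ring.
Qed.

Lemma poly_jet_additiveX x y k w :
  poly_jet (fun t => a ((x + t%:R * y) ^+ k * w))
           (a (x ^+ k * w)) (k%:R * a (x ^+ k.-1 * (y * w))).
Proof.
elim: k w => [|k IHk] w.
  by apply: poly_jet_eq (poly_jetC (a (1 * w))) _ _ _; rewrite ?mul0r.
apply: poly_jet_eq
  (poly_jetD (IHk (x * w)) (poly_jetM poly_jetX (IHk (y * w)))) _ _ _.
- move=> t; rewrite exprSr -mulrA mulrDl mulrDr a_add -additive_map_natrM.
  by congr (_ + a _); ring.
- by rewrite mul0r addr0 exprSr mulrA.
case: k {IHk} => [|k]; rewrite /= ?mul0r ?mul1r ?expr0 ?add0r //.
by rewrite [y * _]mulrCA [x ^+ k * _]mulrA -exprSr [k.+2%:R]mulrSr mulrDl mul1r.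
Qed.

(* [(c, m, k, w)] stands for the monomial [c * io x ^+ m * a (x ^+ k * w)]. *)
Definition term := (K * nat * nat * F)%type.

Definition eval_term x (T : term) :=
  let: (c, m, k, w) := T in c * io x ^+ m * a (x ^+ k * w).

Definition eval_terms x (s : seq term) := \sum_(T <- s) eval_term x T.

Definition deriv_term y (T : term) : seq term :=
  let: (c, m, k, w) := T in
  [:: (c * m%:R * io y, m.-1, k, w); (c * k%:R, m, k.-1, y * w)].

Definition deriv_terms y (s : seq term) := flatten (map (deriv_term y) s).

Lemma poly_jet_eval_terms x y s :
  poly_jet (fun t => eval_terms (x + t%:R * y) s)
           (eval_terms x s) (eval_terms x (deriv_terms y s)).
Proof.
elim: s => [|[[[c m] k] w] s IHs].
  apply: poly_jet_eq (poly_jetC 0) _ _ _ => [t||];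
  by rewrite /eval_terms big_nil.
apply: poly_jet_eq (poly_jetD (poly_jetM (poly_jetM (poly_jetC c)
    (poly_jet_rmorphX x y m)) (poly_jet_additiveX x y k w)) IHs) _ _ _.
- by move=> t; rewrite /eval_terms big_cons.
- by rewrite /eval_terms big_cons.
by rewrite /eval_terms /= big_cat !big_cons big_nil /=; ring.
Qed.

Hypothesis K0 : [pchar K] =i pred0.

Lemma deriv_terms_eq0 s y :
  (forall x, eval_terms x s = 0) ->
  forall x, eval_terms x (deriv_terms y s) = 0.
Proof.
by move=> s0 x; apply: poly_jet_slope_eq0 K0 (poly_jet_eval_terms x y s) _.
Qed.

Hypothesis a_eq : forall x : F,
  2 * a (x ^+ 6) - 9 * io (x ^+ 2) * a (x ^+ 4)
  - 4 * io (x ^+ 3) * a (x ^+ 3) + 36 * io (x ^+ 4) * a (x ^+ 2)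
  - 36 * io (x ^+ 5) * a x = 0.

Lemma additive_map1_eq0 : a 1 = 0.
Proof.
have := a_eq 1; rewrite !expr1n !rmorph1 => a1_eq.
have : 11%:R * a 1 = 0 by rewrite -oppr0 -a1_eq; ring.
by move/eqP; rewrite mulf_eq0 (negPf (natf_neq0_pchar0 K0 _)) //= => /eqP.
Qed.

Definition eq_terms : seq term :=
  [:: (2, 0%N, 6%N, 1); (-9, 2%N, 4%N, 1); (-4, 3%N, 3%N, 1);
      (36, 4%N, 2%N, 1); (-36, 5%N, 1%N, 1)].

Lemma eval_eq_terms x : eval_terms x eq_terms = 0.
Proof.
by rewrite -(a_eq x) /eval_terms !big_cons big_nil /= !mulr1 !rmorphXn; ring.
Qed.

Lemma iter_leibniz_defect3_eq0 y z w x :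
  iter_leibniz_defect io a [:: y; z; w] x = 0.
Proof.
have := deriv_terms_eq0 x (deriv_terms_eq0 w (deriv_terms_eq0 z
          (deriv_terms_eq0 y eval_eq_terms))) 1.
rewrite /eval_terms /= !big_cons big_nil /= !(expr1n, mul1r, mulr1, rmorph1).
rewrite additive_map1_eq0 => expansion.
apply: (mulfI (@natf_neq0_pchar0 _ K0 504 isT)); rewrite mulr0 -[RHS]expansion.
by rewrite /leibniz_defect !rmorphM -!mulrA; ring.
Qed.

End Polarization.

Theorem mainTheorem3 (F K : fieldType) (iota : {rmorphism F -> K})
  (charF : [pchar F] =i pred0) (charK : [pchar K] =i pred0)
  (a : F -> K) (a_add : additive_map a)
  (Heq : forall x : F,
     2 * a (x ^+ 6) - 9 * iota (x ^+ 2) * a (x ^+ 4)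
     - 4 * iota (x ^+ 3) * a (x ^+ 3) + 36 * iota (x ^+ 4) * a (x ^+ 2)
     - 36 * iota (x ^+ 5) * a x = 0) :
  derivation_of_order iota 3 a.
Proof.
apply: derivation_of_order_iter_defect => // -[|y [|z [|w [|? ?]]]] // _ x.
exact: iter_leibniz_defect3_eq0.
Qed.
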